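(* For $n\ge 1$, the number $t_n(321)$ of shallow $321$-avoiding permutations in $S_n$ equals $F_{2n-1}$.
   Context: For $\pi\in S_n$: $D(\pi)=\sum_{i}|\pi_i-i|$, $I(\pi)$ is the number of inversions, $T(\pi)=n-\mathrm{cyc}(\pi)$ with $\mathrm{cyc}$ the number of cycles in the disjoint cycle decomposition; $\pi$ is shallow if $I(\pi)+T(\pi)=D(\pi)$. A permutation avoids a pattern $\sigma$ if it has no subsequence order-isomorphic to $\sigma$. $F_m$ are the Fibonacci numbers with $F_1=F_2=1$. *)

From mathcomp Require Import all_boot all_order all_fingroup.
Set Implicit Arguments. Unset Strict Implicit. Unset Printing Implicit Defensive.

(* Permutations of S_n are modelled as 's : 'S_n' acting on 'I_n = {0,...,n-1}
   (0-based positions; |pi_i - i| is unaffected by the shift). *)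

Definition disp n (s : 'S_n) : nat :=
  \sum_(i < n) (if (s i <= i)%N then (i - s i)%N else (s i - i)%N).

Definition inv n (s : 'S_n) : nat :=
  #|[set p : 'I_n * 'I_n | (p.1 < p.2)%N && (s p.2 < s p.1)%N]|.

(* number of cycles (fixed points count as cycles) *)
Definition ncycles n (s : 'S_n) : nat := #|porbits s|.

Definition tdepth n (s : 'S_n) : nat := (n - ncycles s)%N.

Definition shallow n (s : 'S_n) : bool := (inv s + tdepth s)%N == disp s.

Definition contains n k (s : 'S_n) (sigma : 'S_k) : bool :=
  [exists f : {ffun 'I_k -> 'I_n},
    [forall a : 'I_k, forall b : 'I_k,
       ((a < b)%N ==> (f a < f b)%N) &&
       ((s (f a) < s (f b))%N == (sigma a < sigma b)%N)]].

Definition avoids n k (s : 'S_n) (sigma : 'S_k) : bool := ~~ contains s sigma.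

(* the pattern 321, i.e. 0-based [2;1;0] : the reversal permutation of 'I_3 *)
Definition p321 : 'S_3 := perm (@rev_ord_inj 3).

Fixpoint fib (m : nat) : nat :=
  match m with
  | 0 => 0
  | 1 => 1
  | (S ((S m'') as m')) => fib m' + fib m''
  end.

From mathcomp Require Import all_boot all_order all_fingroup.
From mathcomp Require Import zify.
Set Implicit Arguments. Unset Strict Implicit. Unset Printing Implicit Defensive.

(* Every permutation of S_(n+1) arises uniquely from one of S_n by placing the
   new largest value n at some position x and moving the entry previously at x
   to the end.  For x = n this adds a fixed point and no inversion; for x < n it
   keeps the number of cycles and adds 1 + 2e inversions, where e counts the
   later entries exceeding the one at x.  Hence T <= I, and the "tight"
   permutations, those with T = I, are exactly the ones built by insertions at
   right-to-left maxima.  Such insertions create no 321 pattern, and a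
   321-avoiding permutation has D = 2I, so the shallow 321-avoiding
   permutations are exactly the tight ones.  A tight permutation of S_(n+1)
   has one right-to-left maximum if it fixes n and two otherwise, which yields
   the Fibonacci recurrences. *)

Local Notation widen := (widen_ord (leqnSn _)).

Lemma widen_eq_max n (i : 'I_n) : (widen i == ord_max) = false.
Proof. by apply/negbTE; rewrite -val_eqE /= neq_ltn ltn_ord. Qed.

Lemma widen_inj n : injective (widen_ord (leqnSn n)).
Proof. by move=> i j /(congr1 val) /= /val_inj. Qed.

Lemma widen_lift n (i : 'I_n) : widen i = lift ord_max i.
Proof. by apply: val_inj; rewrite [RHS]lift_max. Qed.

Lemma ordS_cases n (x : 'I_n.+1) : x = ord_max \/ exists k, x = widen k.
Proof.
case: (unliftP ord_max x) => [k ->|->]; last by left.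
by right; exists k; rewrite widen_lift.
Qed.

Section Insertion.

Variable n : nat.
Implicit Types (s : 'S_n) (k i : 'I_n).

(* Position x receives the new value n and position n the old value s x. *)
Definition ins s (x : 'I_n.+1) : 'S_n.+1 :=
  tperm x ord_max * lift_perm ord_max ord_max s.

Lemma ins_max_widen s i : (ins s ord_max (widen i) : nat) = s i.
Proof. by rewrite /ins tperm1 mul1g widen_lift lift_perm_lift lift_max. Qed.

Lemma ins_max_max s : ins s ord_max ord_max = ord_max.
Proof. by rewrite /ins tperm1 mul1g lift_perm_id. Qed.

Lemma ins_widen_widen s k i :
  (ins s (widen k) (widen i) : nat) = if i == k then n else s i.
Proof.
rewrite /ins permM; case: eqP => [->|/eqP ne].
  by rewrite tpermL lift_perm_id.
rewrite tpermD; first by rewrite widen_lift lift_perm_lift lift_max.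
  by rewrite (inj_eq (@widen_inj n)) eq_sym.
by rewrite eq_sym widen_eq_max.
Qed.

Lemma ins_widen_max s k : (ins s (widen k) ord_max : nat) = s k.
Proof. by rewrite /ins permM tpermR widen_lift lift_perm_lift lift_max. Qed.

Lemma ins_widen_max_eq s k : (ins s (widen k) ord_max == ord_max) = false.
Proof.
apply/negbTE; rewrite -val_eqE /= ins_widen_max.
by rewrite neq_ltn ltn_ord.
Qed.

Lemma ins_pos s x : ins s x x = ord_max.
Proof. by rewrite /ins permM tpermL lift_perm_id. Qed.

Lemma ins_inj : injective (fun p : 'S_n * 'I_n.+1 => ins p.1 p.2).
Proof.
move=> [s x] [t y] /= Est.
have exy : x = y by apply: (@perm_inj _ (ins s x)); rewrite ins_pos Est ins_pos.
subst y; congr pair.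
move: Est; rewrite /ins => /mulgI Est; apply/permP => i.
have := congr1 (fun p : 'S_n.+1 => p (lift ord_max i)) Est.
by rewrite !lift_perm_lift => /lift_inj.
Qed.

Lemma ins_bij : bijective (fun p : 'S_n * 'I_n.+1 => ins p.1 p.2).
Proof.
apply: inj_card_bij; first exact: ins_inj.
by rewrite card_prod !card_Sn card_ord factS mulnC.
Qed.

Lemma insP (p : 'S_n.+1) : exists s x, p = ins s x.
Proof.
have [g _ Kg] := ins_bij.
by exists (g p).1, (g p).2; rewrite (Kg p).
Qed.

Lemma big_perm_ins (F : 'S_n.+1 -> nat) :
  \sum_(p : 'S_n.+1) F p = \sum_(s : 'S_n) \sum_(x : 'I_n.+1) F (ins s x).
Proof.
rewrite (reindex (fun p : 'S_n * 'I_n.+1 => ins p.1 p.2)) /=.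
  by rewrite pair_big.
by apply: onW_bij; exact: ins_bij.
Qed.

End Insertion.

Section Cycles.

Variable n : nat.
Implicit Types (s : 'S_n).

Lemma porbit_lift_perm s k :
  porbit (lift_perm ord_max ord_max s) (lift ord_max k) = lift ord_max @: porbit s k.
Proof.
have iterE i : iter i (lift_perm ord_max ord_max s) (lift ord_max k) =
    lift ord_max (iter i s k).
  by elim: i => //= i ->; rewrite lift_perm_lift.
apply/setP => y; apply/porbitP/imsetP.
  by case=> i ->; exists ((s ^+ i)%g k); rewrite ?mem_porbit // !permX iterE.
by case=> z /porbitP [i ->] ->; exists i; rewrite !permX iterE.
Qed.

Lemma porbit_lift_perm_max s :
  porbit (lift_perm ord_max ord_max s) ord_max = [set ord_max].
Proof.
apply/setP => y; rewrite inE; apply/porbitP/eqP.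
  by case=> i ->; rewrite permX_fix // lift_perm_id.
by move=> ->; exists 0; rewrite expg0 perm1.
Qed.

Lemma ncycles_ins_max s : ncycles (ins s ord_max) = (ncycles s).+1.
Proof.
have imsetT (T rT : finType) (f : T -> rT) : f @: T = f @: [set: T].
  by apply/setP => y; apply/imsetP/imsetP => [] [x _ ->]; exists x.
rewrite /ncycles /ins tperm1 mul1g /porbits !imsetT.
have -> : [set: 'I_n.+1] = ord_max |: [set lift ord_max k | k : 'I_n].
  apply/setP => z; rewrite !inE; case: (unliftP ord_max z) => [k ->|->].
    by rewrite imset_f ?orbT.
  by rewrite eqxx.
rewrite imsetU1 -imset_comp porbit_lift_perm_max.
set liftS := fun P : {set 'I_n} => lift ord_max @: P.
have -> : [set (porbit (lift_perm ord_max ord_max s) \o lift ord_max) x | x : 'I_n]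
    = liftS @: (porbit s @: [set: 'I_n]).
  rewrite -imset_comp imsetT; apply: eq_imset => k /=; exact: porbit_lift_perm.
rewrite cardsU1 (card_imset _ (imset_inj (@lift_inj n.+1 ord_max))).
suff -> : [set ord_max] \notin liftS @: (porbit s @: [set: 'I_n]) by [].
apply/imsetP => [[P _] /setP /(_ ord_max)].
rewrite inE eqxx => /esym /imsetP [k _] Ek.
by move: (neq_lift ord_max k); rewrite -Ek eqxx.
Qed.

(* ins s (widen k) merges the fixed point n into the cycle of k. *)
Lemma ncycles_ins_widen s k : ncycles (ins s (widen k)) = ncycles s.
Proof.
have := porbits_mul_tperm (lift_perm ord_max ord_max s) (widen k) ord_max.
rewrite porbit_lift_perm_max inE widen_eq_max /=.
have := ncycles_ins_max s; rewrite /ncycles /ins tperm1 mul1g => ->.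
move=> H; apply/eqP; rewrite -(eqn_add2r 2) H; lia.
Qed.

Lemma ncycles_le s : ncycles s <= n.
Proof. by rewrite /ncycles /porbits (leq_trans (leq_imset_card _ _)) // card_ord. Qed.

Lemma tdepth_ins_max s : tdepth (ins s ord_max) = tdepth s.
Proof. by rewrite /tdepth ncycles_ins_max subSS. Qed.

Lemma tdepth_ins_widen s k : tdepth (ins s (widen k)) = (tdepth s).+1.
Proof. rewrite /tdepth ncycles_ins_widen; have := ncycles_le s; lia. Qed.

End Cycles.

Definition above_right n (s : 'S_n) (k : 'I_n) : nat :=
  \sum_(j < n) ((k < j) && (s k < s j)).

Lemma invE n (s : 'S_n) :
  inv s = \sum_(i < n) \sum_(j < n) ((i < j) && (s j < s i)).
Proof.
rewrite /inv -sum1dep_card big_mkcond pair_big /=.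
by apply: eq_bigr => p _; case: ifP.
Qed.

Lemma inv_ord_recr n (p : 'S_n.+1) : inv p =
  \sum_(i < n) \sum_(j < n) ((i < j) && (p (widen j) < p (widen i)))
  + \sum_(i < n) (p ord_max < p (widen i)).
Proof.
rewrite invE big_ord_recr /= [X in _ + X]big1 ?addn0; last first.
  by move=> j _; rewrite ltnNge -ltnS ltn_ord.
rewrite -big_split; apply: eq_bigr => i _; rewrite big_ord_recr /= ltn_ord //.
Qed.

Lemma inv_sum_bigD1 n (v : 'I_n -> nat) (k : 'I_n) :
  \sum_(i < n) \sum_(j < n) ((i < j) && (v j < v i)) =
  \sum_(j < n) ((k < j) && (v j < v k)) + \sum_(i < n) ((i < k) && (v k < v i)) +
  \sum_(i < n | i != k) \sum_(j < n | j != k) ((i < j) && (v j < v i)).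
Proof.
rewrite (bigD1 k) //= -addnA; congr (_ + _).
rewrite [X in X + _](bigD1 k) //= ltnn add0n -big_split /=.
by apply: eq_bigr => i _; rewrite (bigD1 k).
Qed.

Lemma inv_ins_max n (s : 'S_n) : inv (ins s ord_max) = inv s.
Proof.
rewrite inv_ord_recr invE [X in _ + X]big1 ?addn0; last first.
  by move=> i _; rewrite ins_max_max ins_max_widen ltnNge ltnW.
by apply: eq_bigr => i _; apply: eq_bigr => j _; rewrite !ins_max_widen.
Qed.

Lemma inv_ins_widen n (s : 'S_n) k :
  inv (ins s (widen k)) = inv s + 1 + 2 * above_right s k.
Proof.
rewrite inv_ord_recr.
under eq_bigr do under eq_bigr do rewrite !ins_widen_widen.
under [X in _ + X]eq_bigr do rewrite ins_widen_widen ins_widen_max.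
rewrite (inv_sum_bigD1 (fun i => if i == k then n else s i) k) invE.
rewrite (inv_sum_bigD1 (fun i => nat_of_ord (s i)) k); cbv beta; rewrite eqxx.
have -> : \sum_(i < n | i != k) \sum_(j < n | j != k)
   ((i < j) && ((if j == k then n else s j) < (if i == k then n else s i))) =
   \sum_(i < n | i != k) \sum_(j < n | j != k) ((i < j) && (s j < s i)).
  by apply: eq_bigr => i /negbTE ->; apply: eq_bigr => j /negbTE ->.
have -> : \sum_(i < n) ((i < k) && (n < (if i == k then n else s i))) = 0.
  rewrite big1 // => i _; case: eqP => _; rewrite ?ltnn ?andbF //.
  by rewrite [n < _]ltnNge (ltnW (ltn_ord (s i))) andbF.
have -> : \sum_(j < n) ((k < j) && ((if j == k then n else s j) < n)) =
   \sum_(j < n) ((k < j) && (s j < s k)) + above_right s k.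
  rewrite /above_right -big_split /=; apply: eq_bigr => j _.
  case: eqP => [->|/eqP ne]; first by rewrite ltnn.
  have : (s j : nat) != s k by rewrite (inj_eq val_inj) (inj_eq perm_inj).
  have := ltn_ord (s j); case: (k < j) => //=; lia.
have -> : \sum_(i < n) (s k < (if i == k then n else s i)) =
   \sum_(i < n) ((i < k) && (s k < s i)) + above_right s k + 1.
  have -> : 1 = \sum_(i < n) (i == k).
    by rewrite (bigD1 k) // (eqxx k) big1 // => i /andP[_ /negbTE ->].
  rewrite /above_right -!big_split; apply: eq_bigr => i _.
  case: (eqVneq i k) => [->|ne]; first by rewrite ltnn ?eqxx ltn_ord.
  rewrite ?(negbTE ne); move: ne; rewrite -(inj_eq val_inj) => /eqP ne /=.
  by case: (s k < s i); case: (ltngtP i k) => H //; case: ne.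
lia.
Qed.

Lemma tdepth_le_inv n (s : 'S_n) : tdepth s <= inv s.
Proof.
elim: n s => [|n IH] s; first by rewrite /tdepth.
have [t [x ->]] := insP s.
case: (ordS_cases x) => [->|[k ->]]; first by rewrite tdepth_ins_max inv_ins_max.
rewrite tdepth_ins_widen inv_ins_widen; have := IH t; lia.
Qed.

Definition tight n (s : 'S_n) : bool := tdepth s == inv s.

Lemma tight_ins_max n (s : 'S_n) : tight (ins s ord_max) = tight s.
Proof. by rewrite /tight tdepth_ins_max inv_ins_max. Qed.

Lemma tight_ins_widen n (s : 'S_n) k :
  tight (ins s (widen k)) = tight s && (above_right s k == 0).
Proof.
rewrite /tight tdepth_ins_widen inv_ins_widen; have := tdepth_le_inv s.
case: (above_right s k =P 0) => [->|/eqP]; rewrite ?andbT ?andbF; first by lia.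
move=> ne0 le_td; apply/eqP; lia.
Qed.

Definition has321 (f : nat -> nat) (m : nat) :=
  exists i j k, [/\ i < j, j < k, k < m, f k < f j & f j < f i].

Definition val_at n (s : 'S_n) (i : nat) : nat :=
  if insub i is Some i' then nat_of_ord (s i') else 0.

Lemma val_atE n (s : 'S_n) (i : 'I_n) : val_at s i = s i.
Proof. by rewrite /val_at valK. Qed.

Lemma val_at_lt n (s : 'S_n) i : i < n -> val_at s i < n.
Proof. by move=> H; rewrite -[i]/(nat_of_ord (Ordinal H)) val_atE ltn_ord. Qed.

Lemma p321E (a : 'I_3) : (p321 a : nat) = 2 - a.
Proof. by rewrite /p321 permE /=; case: a => [[|[|[|]]]]. Qed.

Lemma contains321P n (s : 'S_n) : reflect (has321 (val_at s) n) (contains s p321).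
Proof.
apply: (iffP idP).
  move/existsP => [f /forallP H].
  pose o0 : 'I_3 := Ordinal (isT : 0 < 3).
  pose o1 : 'I_3 := Ordinal (isT : 1 < 3).
  pose o2 : 'I_3 := Ordinal (isT : 2 < 3).
  have H01 := forallP (H o0) o1; have H12 := forallP (H o1) o2.
  move: H01 H12; rewrite !p321E /= => /andP [h1 /eqP h2] /andP [h3 /eqP h4].
  exists (f o0), (f o1), (f o2); rewrite !val_atE; split => //.
  - have : f o1 != f o2 by rewrite neq_ltn h3.
    rewrite -(inj_eq (@perm_inj _ s)) -(inj_eq val_inj) /=; lia.
  - have : f o0 != f o1 by rewrite neq_ltn h1.
    rewrite -(inj_eq (@perm_inj _ s)) -(inj_eq val_inj) /=; lia.
move=> [i [j [k [hij hjk hk]]]].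
have hj : j < n by lia.
have hi : i < n by lia.
pose I := Ordinal hi; pose J := Ordinal hj; pose K := Ordinal hk.
rewrite -[i]/(val I) -[j]/(val J) -[k]/(val K) !val_atE => h1 h2.
apply/existsP.
exists [ffun a : 'I_3 => if val a == 0 then I else if val a == 1 then J else K].
apply/forallP => a; apply/forallP => b; rewrite !ffunE !p321E.
case: a => [[|[|[|a]]] Ha] //; case: b => [[|[|[|b]]] Hb] //=.
  all: try (apply/andP; split; first lia); apply/eqP; lia.
Qed.

Lemma val_at_ins_max_lt n (s : 'S_n) i :
  i < n -> val_at (ins s ord_max) i = val_at s i.
Proof.
move=> H; rewrite -[i]/(nat_of_ord (widen (Ordinal H))) val_atE ins_max_widen.
by rewrite -[X in _ = val_at s X]/(nat_of_ord (Ordinal H)) val_atE.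
Qed.

Lemma val_at_ins_max_n n (s : 'S_n) : val_at (ins s ord_max) n = n.
Proof. by rewrite -[n in val_at _ n]/(nat_of_ord (@ord_max n)) val_atE ins_max_max. Qed.

Lemma val_at_ins_widen_lt n (s : 'S_n) k i :
  i < n -> val_at (ins s (widen k)) i = if i == k then n else val_at s i.
Proof.
move=> H; rewrite -[i]/(nat_of_ord (widen (Ordinal H))) val_atE ins_widen_widen.
by rewrite -[X in _ = if _ then _ else val_at s X]/(nat_of_ord (Ordinal H)) val_atE.
Qed.

Lemma val_at_ins_widen_n n (s : 'S_n) k : val_at (ins s (widen k)) n = val_at s k.
Proof.
by rewrite -[n in val_at _ n]/(nat_of_ord (@ord_max n)) val_atE ins_widen_max val_atE.
Qed.

Lemma rlmax_val_at n (s : 'S_n) (k : 'I_n) :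
  above_right s k = 0 -> forall j, k < j -> j < n -> val_at s j < val_at s k.
Proof.
move=> /eqP; rewrite /above_right sum_nat_eq0 => /forallP H j hkj hj.
have := H (Ordinal hj); rewrite -[j]/(nat_of_ord (Ordinal hj)) !val_atE /= hkj /=.
rewrite eqb0 -leqNgt.
have : Ordinal hj != k by rewrite -(inj_eq val_inj) /= neq_ltn hkj orbT.
rewrite -(inj_eq (@perm_inj _ s)) -(inj_eq val_inj) /=; lia.
Qed.

Lemma has321_ins_max n (s : 'S_n) :
  has321 (val_at (ins s ord_max)) n.+1 -> has321 (val_at s) n.
Proof.
move=> [i [j [k [hij hjk hk h1 h2]]]].
have hj : j < n by lia.
have hi : i < n by lia.
have := val_at_lt s hj; rewrite !val_at_ins_max_lt // in h2 *.
case: (ltnP k n) => hkn.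
  by move=> _; rewrite !val_at_ins_max_lt // in h1; exists i, j, k; split.
have ekn : k = n by lia.
by rewrite ekn val_at_ins_max_n val_at_ins_max_lt in h1; lia.
Qed.

(* A 321 of ins s (widen k) through position k or n yields one of s through k,
   since every later entry of s is below the right-to-left maximum s k. *)
Lemma has321_ins_rlmax n (s : 'S_n) k : above_right s k = 0 ->
  has321 (val_at (ins s (widen k))) n.+1 -> has321 (val_at s) n.
Proof.
move=> /rlmax_val_at R [i [j [k1 [hij hjk hk h1 h2]]]].
have hj : j < n by lia.
have hi : i < n by lia.
have bi := val_at_lt s hi; have bj := val_at_lt s hj.
have bk := val_at_lt s (ltn_ord k).
rewrite (val_at_ins_widen_lt s k hi) (val_at_ins_widen_lt s k hj) in h2.
rewrite (val_at_ins_widen_lt s k hj) in h1.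
case: (ltnP k1 n) => hkn.
  have bk1 := val_at_lt s hkn.
  rewrite (val_at_ins_widen_lt s k hkn) in h1.
  move: h1 h2; case: eqP => ek; case: eqP => ej; case: eqP => ei; move=> /= h1 h2; try lia.
    have := R j; rewrite -ei => /(_ hij hj) h3.
    by exists i, j, k1; split; rewrite // -ei.
  by exists i, j, k1; split.
have ekn : k1 = n by lia.
subst k1; rewrite val_at_ins_widen_n in h1.
move: h1 h2; case: eqP => ej; case: eqP => ei; move=> /= h1 h2; try lia.
  have h3 : k < j by rewrite -ei.
  by have := R j h3 hj; lia.
case: (ltngtP j k) => hjk0.
- by exists i, j, k; split.
- by have := R j hjk0 hj; lia.
- by case: ej.
Qed.

Lemma tight_321free n (s : 'S_n) : tight s -> ~ has321 (val_at s) n.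
Proof.
elim: n s => [|n IH] p; first by move=> _ [i [j [k [_ _]]]].
have [s [x ->]] := insP p.
case: (ordS_cases x) => [->|[k ->]].
  by rewrite tight_ins_max => /IH Hs /has321_ins_max.
by rewrite tight_ins_widen => /andP [/IH Hs /eqP rk] /(has321_ins_rlmax rk).
Qed.

Lemma sum_ord_lt n c : c <= n -> \sum_(j < n) (j < c) = c.
Proof.
elim: n => [|n IH] H; first by rewrite big_ord0; lia.
rewrite big_ord_recr /=; case: (ltnP n c) => h.
  have -> : c = n.+1 by lia.
  rewrite (eq_bigr (fun _ => 1)); last by move=> j _; rewrite ltnS (ltnW (ltn_ord j)).
  by rewrite sum_nat_const card_ord muln1 addn1.
by rewrite IH // addn0.
Qed.

Lemma sum_perm_lt n (s : 'S_n) c : c <= n -> \sum_(j < n) (s j < c) = c.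
Proof.
by move=> H; rewrite -{2}(sum_ord_lt H) [RHS](reindex_inj (@perm_inj _ s)).
Qed.

Lemma sum_nat_gt0_ex n (b : 'I_n -> bool) :
  0 < \sum_(j < n) (b j : nat) -> exists j, b j.
Proof.
move=> H; case: (pickP b) => [j bj|N]; first by exists j.
by move: H; rewrite big1 // => j _; rewrite N.
Qed.

(* With l, r, a the numbers of larger entries to the left, smaller entries to the
   right and smaller entries to the left of position i, we have i = a + l and
   s i = a + r; avoiding 321 forces l = 0 or r = 0, so |s i - i| = l + r. *)
Lemma disp_321free n (s : 'S_n) : ~ has321 (val_at s) n -> disp s = 2 * inv s.
Proof.
move=> Hav.
pose l (i : 'I_n) := \sum_(j < n) ((j < i) && (s i < s j)).
pose r (i : 'I_n) := \sum_(j < n) ((i < j) && (s j < s i)).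
pose a (i : 'I_n) := \sum_(j < n) ((j < i) && (s j < s i)).
have inv_r : inv s = \sum_i r i by rewrite invE.
have inv_l : inv s = \sum_i l i by rewrite invE exchange_big.
have val_ar i : (s i : nat) = a i + r i.
  rewrite -{1}(sum_perm_lt s (ltnW (ltn_ord (s i)))) /a /r -big_split.
  apply: eq_bigr => j _.
  case: (ltngtP j i) => h /=; rewrite ?addn0 //.
  by rewrite (val_inj h) ltnn.
have pos_al (i : 'I_n) : (i : nat) = a i + l i.
  rewrite -{1}(sum_ord_lt (ltnW (ltn_ord i))) /a /l -big_split.
  apply: eq_bigr => j _.
  case: (ltnP j i) => h //=.
  have : s j != s i by rewrite (inj_eq perm_inj) -(inj_eq val_inj) /= neq_ltn h.
  rewrite -(inj_eq val_inj) /=; case: ltngtP => //.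
have lr0 (i : 'I_n) : l i = 0 \/ r i = 0.
  case: (posnP (l i)) => [|hl]; first by left.
  case: (posnP (r i)) => [|hr]; first by right.
  exfalso; have [j /andP [hj1 hj2]] := sum_nat_gt0_ex hl.
  have [k /andP [hk1 hk2]] := sum_nat_gt0_ex hr.
  by apply: Hav; exists j, i, k; rewrite !val_atE; split.
rewrite /disp mul2n -addnn {1}inv_l {1}inv_r -big_split /=.
apply: eq_bigr => i _.
have := val_ar i; have := pos_al i; case: (lr0 i) => ->; case: leqP; lia.
Qed.

Lemma shallow321_tight n (s : 'S_n) : shallow s && avoids s p321 = tight s.
Proof.
rewrite /shallow /avoids /tight; apply/idP/idP.
- case/andP => /eqP Hsh /(elimN (contains321P _)) Hav.
  by apply/eqP; have := disp_321free Hav; lia.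
- move=> Gs; have Hav := tight_321free Gs.
  by apply/andP; split; [rewrite disp_321free //; move/eqP: Gs; lia | exact/(introN (contains321P _))].
Qed.

Definition nrlmax n (s : 'S_n) := \sum_(k < n) (above_right s k == 0).

Lemma above_right_eq0 n (s : 'S_n) (k j : 'I_n) :
  k < j -> s k < s j -> (above_right s k == 0) = false.
Proof. by move=> h1 h2; apply/negbTE; rewrite /above_right (bigD1 j) //= h1 h2. Qed.

Lemma above_right_max n (s : 'S_n.+1) : above_right s ord_max = 0.
Proof. by rewrite /above_right big1 // => j _; rewrite ltnNge -ltnS ltn_ord. Qed.

(* A tight permutation comes from insertions at right-to-left maxima, and such an
   insertion at position k < n leaves exactly k and n as right-to-left maxima. *)
Lemma nrlmax_tight m (s : 'S_m.+1) : tight s -> nrlmax s = 1 + (s ord_max != ord_max).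
Proof.
have [t [x ->]] := insP s.
rewrite /nrlmax big_ord_recr /= above_right_max eqxx addn1 add1n.
case: (ordS_cases x) => [->|[k0 ->]] Gs.
  rewrite ins_max_max eqxx /=; congr S.
  rewrite big1 // => k _; rewrite (@above_right_eq0 _ _ _ ord_max) //.
    exact: ltn_ord k.
  by rewrite ins_max_widen ins_max_max ltn_ord.
move: Gs; rewrite tight_ins_widen => /andP [Gt /eqP /rlmax_val_at R].
rewrite ins_widen_max_eq; congr S; rewrite (bigD1 k0) //= big1.
  suff -> : above_right (ins t (widen k0)) (widen k0) = 0 by [].
  rewrite /above_right big1 // => j _; rewrite ins_pos /=.
  by have := leq_ord (ins t (widen k0) j); rewrite [m < _]ltnNge => ->; rewrite andbF.
move=> i ni; case: (ltngtP i k0) => h.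
- rewrite (@above_right_eq0 _ _ _ (widen k0)) // ins_pos ins_widen_widen (negbTE ni) /=.
  exact: ltn_ord.
- rewrite (@above_right_eq0 _ _ _ ord_max) //.
  + exact: (ltn_ord i).
  + rewrite ins_widen_widen (negbTE ni) ins_widen_max.
    by have := R i h (ltn_ord i); rewrite !val_atE.
- by move: ni; rewrite -(inj_eq val_inj) /= h eqxx.
Qed.

Definition ntight n := \sum_(s : 'S_n) (tight s : nat).
Definition ntight_moving m := \sum_(s : 'S_m.+1) (tight s && (s ord_max != ord_max) : nat).

Lemma ntight_S m : ntight m.+1 = ntight m + ntight_moving m.
Proof.
rewrite /ntight /ntight_moving !big_perm_ins -big_split; apply: eq_bigr => t _.
rewrite !big_ord_recr /= ins_max_max tight_ins_max eqxx andbF addn0 addnC.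
by congr (_ + _); apply: eq_bigr => k _; rewrite ins_widen_max_eq andbT.
Qed.

Lemma ntight_movingE m :
  ntight_moving m = \sum_(t : 'S_m) (tight t : nat) * nrlmax t.
Proof.
rewrite /ntight_moving big_perm_ins; apply: eq_bigr => t _.
rewrite big_ord_recr /= ins_max_max eqxx andbF addn0 big_distrr /=.
apply: eq_bigr => k _; rewrite tight_ins_widen ins_widen_max_eq andbT.
by case: (tight t); case: (above_right t k == 0).
Qed.

Lemma ntight0 : ntight 0 = 1.
Proof.
rewrite /ntight (eq_bigr (fun _ => 1)); last first.
  by move=> s _; rewrite /tight /tdepth invE big_ord0.
by rewrite sum_nat_const card_Sn.
Qed.

Lemma ntight_moving0 : ntight_moving 0 = 0.
Proof. by rewrite ntight_movingE big1 // => t _; rewrite /nrlmax big_ord0 muln0. Qed.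

Lemma ntight_moving_S m : ntight_moving m.+1 = ntight m.+1 + ntight_moving m.
Proof.
rewrite ntight_movingE /ntight /ntight_moving -big_split; apply: eq_bigr => t _.
case Gt: (tight t) => /=; last by rewrite mul0n.
by rewrite nrlmax_tight //; case: eqP.
Qed.

Lemma ntight_fib m : ntight m.+1 = fib (2 * m + 1) /\ ntight_moving m = fib (2 * m).
Proof.
elim: m => [|m [IHT IHB]]; first by rewrite ntight_S ntight0 ntight_moving0.
have e2 : 2 * m.+1 = (2 * m).+2 by lia.
have eB : ntight_moving m.+1 = fib (2 * m.+1).
  by rewrite ntight_moving_S IHT IHB e2 addn1.
split => //.
have -> : 2 * m.+1 + 1 = (2 * m).+3 by lia.
by rewrite ntight_S eB IHT e2 addn1 addnC.
Qed.

Theorem theorem6p1 (n : nat) : (1 <= n)%N ->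
  #|[set s : 'S_n | shallow s && avoids s p321]| = fib (2 * n - 1).
Proof.
case: n => // m _.
have -> : [set s : 'S_m.+1 | shallow s && avoids s p321] = [set s | tight s].
  by apply/setP => s; rewrite !inE shallow321_tight.
have -> : 2 * m.+1 - 1 = 2 * m + 1 by lia.
have [<- _] := ntight_fib m.
rewrite -sum1dep_card /ntight big_mkcond /=.
by apply: eq_bigr => s _; case: (tight s).
Qed.
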